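(* Let $X_1,X_2$ be infinite dimensional Hilbert spaces, $D_1\in\mathcal{B}(X_1)$, $D_2\in\mathcal{B}(X_2)$. Then for every $C\in\mathcal{B}(X_2,X_1)$, writing $M_C=\begin{bmatrix}D_1&C\\0&D_2\end{bmatrix}\in\mathcal{B}(X_1\oplus X_2)$, $$\sigma(D_1)\cup\sigma(D_2)=\sigma(M_C)\cup\big\{\lambda\in\mathbb{C}:\ 0<\beta(D_1-\lambda)\le\alpha(D_2-\lambda)\ \text{or}\ 0<\alpha(D_2-\lambda)\le\beta(D_1-\lambda)\big\}.$$ In particular, if the set $\{\lambda:\ 0<\beta(D_1-\lambda)\le\alpha(D_2-\lambda)$ or $0<\alpha(D_2-\lambda)\le\beta(D_1-\lambda)\}$ is empty, then $\sigma(D_1)\cup\sigma(D_2)=\sigma(M_C)$ for every $C$.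
   Context: For a bounded operator $T$, $\alpha(T)=\dim\mathcal{N}(T)$, $\beta(T)=\operatorname{codim}\mathcal{R}(T)$, values in $\{0,1,\dots\}\cup\{\infty\}$ (comparisons in this extended set). $\sigma(T)$ is the set of $\lambda\in\mathbb{C}$ such that $\lambda-T$ is not invertible. *)

From HB Require Import structures.
From mathcomp Require Import all_boot all_order all_algebra.
From mathcomp Require Import complex.
From mathcomp Require Import boolp classical_sets reals.
Set Implicit Arguments. Unset Strict Implicit. Unset Printing Implicit Defensive.
Import Order.TTheory GRing.Theory Num.Theory.
Local Open Scope ring_scope.
Local Open Scope classical_set_scope.

Section Hilbert.
Variable R : realType.
Local Notation C := R[i].

Definition inner_product (V : lmodType C) (ip : V -> V -> C) : Prop :=
  [/\ (forall (a : C) (x y z : V), ip (a *: x + y) z = a * ip x z + ip y z),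
      (forall x y : V, ip y x = (ip x y)^*),
      (forall x : V, 0 <= ip x x) &
      (forall x : V, ip x x = 0 -> x = 0)].

Definition hnorm (V : lmodType C) (ip : V -> V -> C) (x : V) : R :=
  Num.sqrt (complex.Re (ip x x)).

Definition hcauchy (V : lmodType C) (ip : V -> V -> C) (u : nat -> V) : Prop :=
  forall e : R, 0 < e -> exists N : nat, forall m n : nat,
    (N <= m)%N -> (N <= n)%N -> hnorm ip (u m - u n) < e.

Definition hconverges (V : lmodType C) (ip : V -> V -> C) (u : nat -> V) (l : V) : Prop :=
  forall e : R, 0 < e -> exists N : nat, forall n : nat,
    (N <= n)%N -> hnorm ip (u n - l) < e.

Definition hilbert_space (V : lmodType C) (ip : V -> V -> C) : Prop :=
  inner_product ip /\
  (forall u : nat -> V, hcauchy ip u -> exists l : V, hconverges ip u l).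

Definition finite_dimensional (V : lmodType C) : Prop :=
  exists (n : nat) (v : 'I_n -> V),
    forall x : V, exists c : 'I_n -> C, x = \sum_(i < n) c i *: v i.

Definition infinite_dimensional (V : lmodType C) : Prop := ~ finite_dimensional V.

Definition is_linear (V W : lmodType C) (T : V -> W) : Prop :=
  forall (a : C) (x y : V), T (a *: x + y) = a *: T x + T y.

Definition bounded_op (V W : lmodType C) (ipV : V -> V -> C) (ipW : W -> W -> C)
  (T : V -> W) : Prop :=
  is_linear T /\ exists M : R, forall x : V, hnorm ipW (T x) <= M * hnorm ipV x.

Definition invertible_op (V : lmodType C) (ip : V -> V -> C) (T : V -> V) : Prop :=
  exists S : V -> V, [/\ bounded_op ip ip S, cancel T S & cancel S T].

Definition spectrum (V : lmodType C) (ip : V -> V -> C) (T : V -> V) : set C :=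
  [set l | ~ invertible_op ip (fun x => l *: x - T x)].

Definition op_shift (V : lmodType C) (T : V -> V) (l : C) : V -> V :=
  fun x => T x - l *: x.

(* ---------- extended naturals {0,1,...} U {oo} : None = oo ---------- *)

Definition ele (a b : option nat) : bool :=
  match a, b with
  | _, None => true
  | None, Some _ => false
  | Some m, Some n => (m <= n)%N
  end.

Definition epos (a : option nat) : bool := a != Some 0%N.

Lemma ex_asbool (P : nat -> Prop) : (exists n, P n) -> exists n, `[< P n >].
Proof. by case=> n Pn; exists n; apply/asboolP. Qed.

Definition mincount (P : nat -> Prop) : option nat :=
  match pselect (exists n, P n) with
  | left h => Some (ex_minn (ex_asbool h))
  | right _ => None
  end.

(* alpha(T) = dim N(T): least number of vectors spanning the kernel *)
Definition alpha (V W : lmodType C) (T : V -> W) : option nat :=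
  mincount (fun n => exists v : 'I_n -> V, forall x : V,
    T x = 0 <-> exists c : 'I_n -> C, x = \sum_(i < n) c i *: v i).

(* beta(T) = codim R(T): least number of vectors whose span together with R(T) is W *)
Definition beta (V W : lmodType C) (T : V -> W) : option nat :=
  mincount (fun n => exists v : 'I_n -> W, forall y : W,
    exists (x : V) (c : 'I_n -> C), y = T x + \sum_(i < n) c i *: v i).

Definition sum_ip (X1 X2 : lmodType C) (ip1 : X1 -> X1 -> C) (ip2 : X2 -> X2 -> C)
  (p q : (X1 * X2)%type) : C := ip1 p.1 q.1 + ip2 p.2 q.2.

Definition upper_tri (X1 X2 : lmodType C) (D1 : X1 -> X1) (Cop : X2 -> X1)
  (D2 : X2 -> X2) (p : (X1 * X2)%type) : (X1 * X2)%type :=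
  (D1 p.1 + Cop p.2, D2 p.2).

Definition defect_set (X1 X2 : lmodType C) (D1 : X1 -> X1) (D2 : X2 -> X2) : set C :=
  [set l | (epos (beta (op_shift D1 l)) && ele (beta (op_shift D1 l)) (alpha (op_shift D2 l)))
        \/ (epos (alpha (op_shift D2 l)) && ele (alpha (op_shift D2 l)) (beta (op_shift D1 l)))].

End Hilbert.

From HB Require Import structures.
From mathcomp Require Import all_boot all_order all_algebra.
From mathcomp Require Import complex.
From mathcomp Require Import boolp classical_sets reals.
From mathcomp Require Import ring.
Import Order.TTheory GRing.Theory Num.Theory.
Local Open Scope ring_scope.
Local Open Scope classical_set_scope.
Set Implicit Arguments. Unset Strict Implicit. Unset Printing Implicit Defensive.

(* If lambda lies outside sigma(D1) and sigma(D2), then M_C - lambda has the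
   triangular inverse built from (D1 - lambda)^-1, C and (D2 - lambda)^-1; and
   outside sigma(D1) the map D1 - lambda is onto, so beta(D1 - lambda) = 0 and
   lambda is not in the defect set.  Conversely, if M_C - lambda is invertible,
   with inverse S, then z |-> C z maps N(D2 - lambda) onto a complement of
   R(D1 - lambda), and x |-> (S (x, 0)).2 maps a complement back onto
   N(D2 - lambda); hence alpha(D2 - lambda) = beta(D1 - lambda).  This common
   value vanishes only if D2 - lambda is injective, and then both diagonal
   entries inherit inverses from S, so lambda lies outside sigma(D1) and
   sigma(D2). *)

Section Operators.
Variable R : realType.
Local Notation C := R[i].

Section LinearMaps.
Variables (V W : lmodType C) (T : V -> W).
Hypothesis T_lin : is_linear T.

Definition linear_of_is_linear : {linear V -> W} :=
  HB.pack T (GRing.isLinear.Build _ _ _ _ T T_lin).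

Lemma is_linear0 : T 0 = 0.
Proof. exact: (linear0 linear_of_is_linear). Qed.

Lemma is_linearN x : T (- x) = - T x.
Proof. exact: (linearN linear_of_is_linear). Qed.

Lemma is_linearB x y : T (x - y) = T x - T y.
Proof. exact: (linearB linear_of_is_linear). Qed.

Lemma is_linear_sum n (c : 'I_n -> C) (v : 'I_n -> V) :
  T (\sum_(i < n) c i *: v i) = \sum_(i < n) c i *: T (v i).
Proof.
have -> : T = linear_of_is_linear by [].
by rewrite linear_sum; apply: eq_bigr => i _; rewrite linearZ.
Qed.

End LinearMaps.

Lemma is_linear_inverse (V W : lmodType C) (T : V -> W) (S : W -> V) :
  is_linear T -> cancel T S -> cancel S T -> is_linear S.
Proof. by move=> T_lin TK SK a x y; rewrite -{1}(SK x) -{1}(SK y) -T_lin TK. Qed.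

Lemma op_shift_linear (V : lmodType C) (D : V -> V) (l : C) :
  is_linear D -> is_linear (op_shift D l).
Proof.
move=> D_lin a x y; rewrite /op_shift D_lin scalerDr scalerA mulrC -scalerA.
by rewrite scalerBr opprD addrACA.
Qed.

Definition sqnorm (V : lmodType C) (ip : V -> V -> C) (x : V) : R :=
  complex.Re (ip x x).

Lemma complex_ReD (x y : C) : complex.Re (x + y) = complex.Re x + complex.Re y.
Proof. by case: x; case: y. Qed.

Section InnerProduct.
Variables (V : lmodType C) (ip : V -> V -> C).
Hypothesis ip_inner : inner_product ip.

Lemma inner_productDl x y z : ip (x + y) z = ip x z + ip y z.
Proof. by case: ip_inner => lin _ _ _; have := lin 1 x y z; rewrite scale1r mul1r. Qed.

Lemma inner_product0l z : ip 0 z = 0.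
Proof. by apply: (addrI (ip 0 z)); rewrite -inner_productDl !addr0. Qed.

Lemma inner_productNl x z : ip (- x) z = - ip x z.
Proof.
case: ip_inner => lin _ _ _.
by rewrite -[- x]addr0 -scaleN1r lin inner_product0l addr0 mulN1r.
Qed.

Lemma inner_productDr x y z : ip x (y + z) = ip x y + ip x z.
Proof.
by case: ip_inner => _ sym _ _; rewrite sym inner_productDl rmorphD (sym y) (sym z).
Qed.

Lemma inner_productNr x z : ip x (- z) = - ip x z.
Proof. by case: ip_inner => _ sym _ _; rewrite sym inner_productNl rmorphN (sym z). Qed.

Lemma sqnorm_ge0 x : 0 <= sqnorm ip x.
Proof. by case: ip_inner => _ _ ge0 _; move: (ge0 x); rewrite lecE => /andP[]. Qed.

Lemma sqnorm0 : sqnorm ip 0 = 0.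
Proof. by rewrite /sqnorm inner_product0l. Qed.

Lemma sqnormN x : sqnorm ip (- x) = sqnorm ip x.
Proof. by rewrite /sqnorm inner_productNl inner_productNr opprK. Qed.

Lemma sqnorm_parallelogram x y :
  sqnorm ip (x + y) + sqnorm ip (x - y) = 2 * sqnorm ip x + 2 * sqnorm ip y.
Proof.
rewrite /sqnorm -complex_ReD !(inner_productDl, inner_productDr).
rewrite !(inner_productNl, inner_productNr) opprK.
have -> : ip x x + ip x y + (ip y x + ip y y) + (ip x x - ip x y + (- ip y x + ip y y))
    = ip x x + ip x x + (ip y y + ip y y) by ring.
by rewrite !complex_ReD; ring.
Qed.

Lemma sqnorm_sub_le x y : sqnorm ip (x - y) <= 2 * sqnorm ip x + 2 * sqnorm ip y.
Proof. by rewrite -sqnorm_parallelogram lerDr sqnorm_ge0. Qed.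

End InnerProduct.

Lemma sqnorm_sum (X1 X2 : lmodType C) (ip1 : X1 -> X1 -> C) (ip2 : X2 -> X2 -> C)
    (p : (X1 * X2)%type) :
  sqnorm (sum_ip ip1 ip2) p = sqnorm ip1 p.1 + sqnorm ip2 p.2.
Proof. exact: complex_ReD. Qed.

Lemma sum_ip_inner_product (X1 X2 : lmodType C)
    (ip1 : X1 -> X1 -> C) (ip2 : X2 -> X2 -> C) :
  inner_product ip1 -> inner_product ip2 -> inner_product (sum_ip ip1 ip2).
Proof.
move=> [lin1 sym1 ge1 def1] [lin2 sym2 ge2 def2]; split; rewrite /sum_ip.
- by move=> a p q r; rewrite lin1 lin2 /=; ring.
- by move=> p q; rewrite sym1 sym2 rmorphD.
- by move=> p; rewrite addr_ge0.
- move=> [x z] /eqP /=; rewrite paddr_eq0 //.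
  by case/andP => /eqP/def1 -> /eqP/def2 ->.
Qed.

(* Boundedness in the squared norm: the same notion as [bounded_op] for linear
   maps, but it composes without square roots. *)
Definition sq_bounded (V W : lmodType C) (ipV : V -> V -> C) (ipW : W -> W -> C)
    (T : V -> W) : Prop :=
  exists2 K : R, 0 <= K & forall x, sqnorm ipW (T x) <= K * sqnorm ipV x.

Section SquareBounded.
Variables (U V W : lmodType C).
Variables (ipU : U -> U -> C) (ipV : V -> V -> C) (ipW : W -> W -> C).
Hypotheses (ipU_inner : inner_product ipU) (ipV_inner : inner_product ipV)
  (ipW_inner : inner_product ipW).

Lemma bounded_op_of_sq_bounded (T : U -> V) :
  is_linear T -> sq_bounded ipU ipV T -> bounded_op ipU ipV T.
Proof.
move=> T_lin [K K_ge0 TK]; split=> //; exists (Num.sqrt K) => x.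
by rewrite /hnorm -/(sqnorm _ _) -/(sqnorm _ x) -sqrtrM //; apply: ler_wsqrtr.
Qed.

Lemma sq_bounded_of_bounded_op (T : U -> V) :
  bounded_op ipU ipV T -> sq_bounded ipU ipV T.
Proof.
move=> [_ [M TM]]; set M' := Num.max M 0.
have M'_ge0 : 0 <= M' by rewrite le_max lexx orbT.
exists (M' ^+ 2) => [|x]; first exact: sqr_ge0.
have Tx_ge0 := sqnorm_ge0 ipV_inner (T x); have x_ge0 := sqnorm_ge0 ipU_inner x.
have TM' : hnorm ipV (T x) <= M' * hnorm ipU x.
  by apply: (le_trans (TM x)); rewrite ler_wpM2r ?sqrtr_ge0 // le_max lexx.
rewrite -(sqr_sqrtr Tx_ge0) -(sqr_sqrtr x_ge0) -exprMn.
by rewrite lerXn2r // ?nnegrE ?mulr_ge0 ?sqrtr_ge0.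
Qed.

Lemma sq_bounded_comp (f : V -> W) (g : U -> V) :
  sq_bounded ipV ipW f -> sq_bounded ipU ipV g -> sq_bounded ipU ipW (f \o g).
Proof.
move=> [Kf Kf_ge0 fK] [Kg Kg_ge0 gK]; exists (Kf * Kg) => [|x]; first exact: mulr_ge0.
by rewrite -mulrA; apply: (le_trans (fK _)); apply: ler_wpM2l.
Qed.

Lemma sq_bounded_pair (f : U -> V) (g : U -> W) :
  sq_bounded ipU ipV f -> sq_bounded ipU ipW g ->
  sq_bounded ipU (sum_ip ipV ipW) (fun x => (f x, g x)).
Proof.
move=> [Kf Kf_ge0 fK] [Kg Kg_ge0 gK]; exists (Kf + Kg) => [|x]; first exact: addr_ge0.
by rewrite sqnorm_sum mulrDl; apply: lerD; [exact: fK | exact: gK].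
Qed.

Lemma sq_bounded_sub (f g : U -> V) :
  sq_bounded ipU ipV f -> sq_bounded ipU ipV g ->
  sq_bounded ipU ipV (fun x => f x - g x).
Proof.
move=> [Kf Kf_ge0 fK] [Kg Kg_ge0 gK].
exists (2 * Kf + 2 * Kg) => [|x]; first by rewrite addr_ge0 ?mulr_ge0.
apply: (le_trans (sqnorm_sub_le ipV_inner _ _)).
by rewrite [leRHS]mulrDl -!mulrA; apply: lerD; apply: ler_wpM2l.
Qed.

Lemma sq_bounded_fst : sq_bounded (sum_ip ipV ipW) ipV fst.
Proof. by exists 1 => // p; rewrite sqnorm_sum mul1r lerDl sqnorm_ge0. Qed.

Lemma sq_bounded_snd : sq_bounded (sum_ip ipV ipW) ipW snd.
Proof. by exists 1 => // p; rewrite sqnorm_sum mul1r lerDr sqnorm_ge0. Qed.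

Lemma sq_bounded_inl : sq_bounded ipV (sum_ip ipV ipW) (fun x => (x, 0)).
Proof. by exists 1 => // x; rewrite sqnorm_sum sqnorm0 // addr0 mul1r. Qed.

Lemma sq_bounded_inr : sq_bounded ipW (sum_ip ipV ipW) (fun z => (0, z)).
Proof. by exists 1 => // z; rewrite sqnorm_sum sqnorm0 // add0r mul1r. Qed.

End SquareBounded.

Section Invertibility.
Variables (V : lmodType C) (ip : V -> V -> C).
Hypothesis ip_inner : inner_product ip.

Lemma invertible_op_of_inverse (T S : V -> V) :
  is_linear T -> sq_bounded ip ip S -> cancel T S -> cancel S T ->
  invertible_op ip T.
Proof.
move=> T_lin S_bd TK SK; exists S; split=> //.
by apply: bounded_op_of_sq_bounded => //; apply: is_linear_inverse TK SK.
Qed.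

Lemma invertible_op_opp (T : V -> V) :
  invertible_op ip T -> invertible_op ip (fun x => - T x).
Proof.
case=> S [[S_lin [M SM]] TK SK]; exists (fun y => S (- y)); split.
- split; first by move=> a x y; rewrite opprD -scalerN S_lin.
  by exists M => y; rewrite /hnorm -/(sqnorm ip y) -(sqnormN ip_inner); apply: SM.
- by move=> x; rewrite opprK TK.
- by move=> y; rewrite SK opprK.
Qed.

Lemma invertible_op_oppE (T : V -> V) :
  invertible_op ip (fun x => - T x) <-> invertible_op ip T.
Proof.
split; last exact: invertible_op_opp.
move/invertible_op_opp; congr invertible_op.
by apply/funext => x; rewrite opprK.
Qed.

Lemma spectrum_op_shift (D : V -> V) :
  spectrum ip D = [set l | ~ invertible_op ip (op_shift D l)].
Proof.
apply/funext => l /=; have -> : op_shift D l = (fun x => - (l *: x - D x)).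
  by apply/funext => x; rewrite /op_shift opprB.
by rewrite /spectrum /= (propext (invertible_op_oppE _)).
Qed.

End Invertibility.

Lemma mincount_eq0 (P : nat -> Prop) : mincount P = Some 0%N <-> P 0%N.
Proof.
rewrite /mincount; case: pselect => [ex|nex]; last first.
  by split=> // P0; case: nex; exists 0%N.
case: ex_minnP => m /asboolP Pm m_min; split=> [[m0]|P0]; first by rewrite -m0.
by congr Some; apply/eqP; rewrite -leqn0 m_min //; apply/asboolP.
Qed.

Lemma alpha_eq0_injective (V W : lmodType C) (T : V -> W) :
  alpha T = Some 0%N -> forall x, T x = 0 -> x = 0.
Proof. by move=> /mincount_eq0 [v kerT] x /kerT [c ->]; rewrite big_ord0. Qed.

Lemma beta_eq0 (V W : lmodType C) (T : V -> W) :
  (forall y, exists x, T x = y) -> beta T = Some 0%N.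
Proof.
move=> T_onto; apply/mincount_eq0; exists (fun _ => 0) => y.
by have [x <-] := T_onto y; exists x, (fun _ => 0); rewrite big_ord0 addr0.
Qed.

Lemma is_linear_snd (X1 X2 : lmodType C) : is_linear (@snd X1 X2).
Proof. by []. Qed.

Lemma is_linear_inl (X1 X2 : lmodType C) : is_linear (fun x : X1 => (x, 0 : X2)).
Proof. by move=> a x y; congr (_, _); rewrite /= scaler0 addr0. Qed.

Section UpperTriangular.
Variables (X1 X2 : lmodType C) (ip1 : X1 -> X1 -> C) (ip2 : X2 -> X2 -> C).
Hypotheses (ip1_inner : inner_product ip1) (ip2_inner : inner_product ip2).
Variables (A : X1 -> X1) (Cop : X2 -> X1) (B : X2 -> X2).
Hypotheses (A_lin : is_linear A) (B_lin : is_linear B)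
  (Cop_bd : bounded_op ip2 ip1 Cop).

Local Notation M := (upper_tri A Cop B).
Local Notation ip := (sum_ip ip1 ip2).

Let ip_inner : inner_product ip := sum_ip_inner_product ip1_inner ip2_inner.
Let Cop_lin : is_linear Cop := Cop_bd.1.

Lemma upper_tri_linear : is_linear M.
Proof.
move=> a p q; rewrite /upper_tri A_lin B_lin Cop_lin; congr (_, _) => /=.
by rewrite scalerDr addrACA.
Qed.

Lemma upper_tri_invertible :
  invertible_op ip1 A -> invertible_op ip2 B -> invertible_op ip M.
Proof.
move=> [SA [SA_bd AK SAK]] [SB [SB_bd BK SBK]].
have SA_sq := sq_bounded_of_bounded_op ip1_inner ip1_inner SA_bd.
have SB_sq := sq_bounded_of_bounded_op ip2_inner ip2_inner SB_bd.
have Cop_sq := sq_bounded_of_bounded_op ip2_inner ip1_inner Cop_bd.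
pose S p := (SA (p.1 - Cop (SB p.2)), SB p.2).
apply: (@invertible_op_of_inverse _ _ _ S upper_tri_linear).
- have snd_sq := sq_bounded_snd ip2 ip1_inner.
  apply: sq_bounded_pair; last exact: (sq_bounded_comp SB_sq snd_sq).
  apply: (sq_bounded_comp SA_sq).
  apply: (sq_bounded_sub ip1_inner (sq_bounded_fst ip1 ip2_inner)).
  exact: (sq_bounded_comp Cop_sq (sq_bounded_comp SB_sq snd_sq)).
- by move=> [x z]; rewrite /S /upper_tri /= BK addrK AK.
- by move=> [x z]; rewrite /S /upper_tri /= SAK SBK subrK.
Qed.

Section Inverse.
Variable S : (X1 * X2)%type -> (X1 * X2)%type.
Hypotheses (S_bd : bounded_op ip ip S) (MK : cancel M S) (SK : cancel S M).

Let S_lin : is_linear S := S_bd.1.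
Let S_sq : sq_bounded ip ip S := sq_bounded_of_bounded_op ip_inner ip_inner S_bd.

Let SK1 p : A (S p).1 + Cop (S p).2 = p.1. Proof. exact: (congr1 fst (SK p)). Qed.
Let SK2 p : B (S p).2 = p.2. Proof. exact: (congr1 snd (SK p)). Qed.

Lemma upper_tri_alpha_beta : alpha B = beta A.
Proof.
rewrite /alpha /beta; congr mincount; apply/funext => n; apply/propext; split.
- case=> v kerB; exists (fun i => Cop (v i)) => y.
  have [c Sy2] := (kerB (S (y, 0)).2).1 (SK2 (y, 0)).
  by exists (S (y, 0)).1, c; rewrite -(is_linear_sum Cop_lin) -Sy2 SK1.
- case=> w A_w; exists (fun i => (S (w i, 0)).2) => z; split=> [Bz0|[c ->]].
    have [x [c Cz]] := A_w (Cop z); exists c.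
    have Mxz : M (- x, z) = (\sum_(i < n) c i *: w i, 0).
      by rewrite /upper_tri /= Bz0 (is_linearN A_lin) Cz addKr.
    rewrite -(is_linear_sum (@is_linear_snd _ _)) -(is_linear_sum S_lin).
    by rewrite -(is_linear_sum (@is_linear_inl _ _)) -Mxz MK.
  by rewrite (is_linear_sum B_lin) big1 // => i _; rewrite SK2 scaler0.
Qed.

Lemma upper_tri_invertible_diag :
  (forall z, B z = 0 -> z = 0) -> invertible_op ip1 A /\ invertible_op ip2 B.
Proof.
move=> B_inj; have Sy0 y : (S (y, 0)).2 = 0 by apply: B_inj; rewrite SK2.
split.
- apply: (@invertible_op_of_inverse _ _ _ (fun y => (S (y, 0)).1) A_lin).
  + apply: (sq_bounded_comp (sq_bounded_fst ip1 ip2_inner)).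
    exact: (sq_bounded_comp S_sq (sq_bounded_inl ip1 ip2_inner)).
  + move=> x; have -> : (A x, 0) = M (x, 0).
      by rewrite /upper_tri /= (is_linear0 Cop_lin) (is_linear0 B_lin) addr0.
    by rewrite MK.
  + by move=> y; have := SK1 (y, 0); rewrite Sy0 (is_linear0 Cop_lin) addr0.
- apply: (@invertible_op_of_inverse _ _ _ (fun z => (S (0, z)).2) B_lin).
  + apply: (sq_bounded_comp (sq_bounded_snd ip2 ip1_inner)).
    exact: (sq_bounded_comp S_sq (sq_bounded_inr ip2 ip1_inner)).
  + move=> z; apply/eqP; rewrite -subr_eq0; apply/eqP/B_inj.
    by rewrite (is_linearB B_lin) SK2 subrr.
  + by move=> z; apply: SK2 (0, z).
Qed.

End Inverse.
End UpperTriangular.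

Lemma op_shift_upper_tri (X1 X2 : lmodType C) (D1 : X1 -> X1) (Cop : X2 -> X1)
    (D2 : X2 -> X2) (l : C) :
  op_shift (upper_tri D1 Cop D2) l = upper_tri (op_shift D1 l) Cop (op_shift D2 l).
Proof.
by apply/funext => p; rewrite /op_shift /upper_tri; congr (_, _); rewrite /= addrAC.
Qed.

Section Spectrum.
Variables (X1 X2 : lmodType C) (ip1 : X1 -> X1 -> C) (ip2 : X2 -> X2 -> C).
Hypotheses (ip1_inner : inner_product ip1) (ip2_inner : inner_product ip2).
Variables (D1 : X1 -> X1) (Cop : X2 -> X1) (D2 : X2 -> X2).
Hypotheses (D1_bd : bounded_op ip1 ip1 D1) (D2_bd : bounded_op ip2 ip2 D2)
  (Cop_bd : bounded_op ip2 ip1 Cop).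

Local Notation ip := (sum_ip ip1 ip2).

Let ip_inner : inner_product ip := sum_ip_inner_product ip1_inner ip2_inner.
Let shift1_lin l : is_linear (op_shift D1 l) := op_shift_linear l D1_bd.1.
Let shift2_lin l : is_linear (op_shift D2 l) := op_shift_linear l D2_bd.1.

Lemma spectrum_upper_tri_sub :
  spectrum ip (upper_tri D1 Cop D2) `<=` spectrum ip1 D1 `|` spectrum ip2 D2.
Proof.
rewrite !spectrum_op_shift // => l /= not_inv.
apply: contrapT => /not_orP [/contrapT inv1 /contrapT inv2]; apply: not_inv.
by rewrite op_shift_upper_tri; apply: upper_tri_invertible.
Qed.

Lemma defect_set_sub_spectrum : defect_set D1 D2 `<=` spectrum ip1 D1.
Proof.
rewrite spectrum_op_shift // => l defect /= [S [_ _ SK]].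
have beta0 : beta (op_shift D1 l) = Some 0%N by apply: beta_eq0 => y; exists (S y).
by move: defect; rewrite /defect_set /= beta0; case: alpha => [[|m]|] [].
Qed.

Lemma spectrum_sub_upper_tri_defect :
  spectrum ip1 D1 `|` spectrum ip2 D2 `<=`
  spectrum ip (upper_tri D1 Cop D2) `|` defect_set D1 D2.
Proof.
rewrite !spectrum_op_shift // => l /= sp; rewrite op_shift_upper_tri.
have [[S [S_bd MK SK]]|] :=
  pselect (invertible_op ip (upper_tri (op_shift D1 l) Cop (op_shift D2 l))); last by left.
right; left.
rewrite -(upper_tri_alpha_beta (shift1_lin l) (shift2_lin l) Cop_bd S_bd MK SK).
apply/andP; split; last by case: (alpha _) => //= m.
apply/eqP => /alpha_eq0_injective B_inj.
have [] := upper_tri_invertible_diag ip1_inner ip2_inner (shift1_lin l) (shift2_lin l)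
  Cop_bd S_bd MK SK B_inj.
by case: sp.
Qed.

End Spectrum.
End Operators.

Theorem mainTheorem16 (R : realType) (X1 X2 : lmodType R[i])
  (ip1 : X1 -> X1 -> R[i]) (ip2 : X2 -> X2 -> R[i])
  (H1 : hilbert_space ip1) (H2 : hilbert_space ip2)
  (Inf1 : infinite_dimensional X1) (Inf2 : infinite_dimensional X2)
  (D1 : X1 -> X1) (D2 : X2 -> X2)
  (BD1 : bounded_op ip1 ip1 D1) (BD2 : bounded_op ip2 ip2 D2) :
  (forall Cop : X2 -> X1, bounded_op ip2 ip1 Cop ->
     spectrum ip1 D1 `|` spectrum ip2 D2 =
     spectrum (sum_ip ip1 ip2) (upper_tri D1 Cop D2) `|` defect_set D1 D2)
  /\
  (defect_set D1 D2 = set0 ->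
     forall Cop : X2 -> X1, bounded_op ip2 ip1 Cop ->
     spectrum ip1 D1 `|` spectrum ip2 D2 =
     spectrum (sum_ip ip1 ip2) (upper_tri D1 Cop D2)).
Proof.
have [ip1_inner _] := H1; have [ip2_inner _] := H2.
have spectrumE Cop : bounded_op ip2 ip1 Cop ->
    spectrum ip1 D1 `|` spectrum ip2 D2 =
    spectrum (sum_ip ip1 ip2) (upper_tri D1 Cop D2) `|` defect_set D1 D2.
  move=> Cop_bd; apply/seteqP; split.
    exact: spectrum_sub_upper_tri_defect.
  rewrite subUset; split; first exact: spectrum_upper_tri_sub.
  by move=> l /(defect_set_sub_spectrum ip1_inner); left.
split=> [//|no_defect Cop Cop_bd].
by rewrite (spectrumE Cop Cop_bd) no_defect setU0.
Qed.
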